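(* Let $p\ge q\ge 1$ be integers and $Q=\#^{p}-\#^{q}$. For $k\ge 1$ let $L(k)$ denote the maximal length of a binary word with exactly $k$ zeros that is not detected by $Q$. Then: (i) if $p\ge 2q+1$, then $L(k)=(k+1)p+q$ for all $k\ge1$; (ii) if $q\le p\le 2q+1$, then for all $\ell\ge 0$, $L(2\ell+1)=(\ell+2)p+(2\ell+1)q+\ell$, and for all $\ell\ge1$, $L(2\ell)=(\ell+1)p+(2\ell+1)q+\ell$. Consequently the $k$-critical length of $Q$ equals $L(k)+1$.
   Context: A seed is a finite word over $\{\#,-\}$ beginning and ending with $\#$ ($-$ is called a joker). A seed $Q$ of length $s$ matches a binary word $w$ at position $i$ ($1\le i\le |w|-s+1$) if $w[i+t-1]=1$ for every $t$ with $Q[t]=\#$; $Q$ detects $w$ if it matches $w$ at some position. The $k$-critical length of $Q$ is the minimal $m$ such that $Q$ detects every binary word of length $m$ with exactly $k$ zeros. *)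

From mathcomp Require Import all_boot.
Set Implicit Arguments. Unset Strict Implicit. Unset Printing Implicit Defensive.

(* A seed is a seq bool: true = '#', false = '-' (joker).
   A binary word is a seq bool: true = 1, false = 0.  Positions are 0-based. *)

Definition matches (Q w : seq bool) (i : nat) : bool :=
  (i + size Q <= size w) &&
  all (fun t => nth false Q t ==> nth false w (i + t)) (iota 0 (size Q)).

Definition detects (Q w : seq bool) : bool :=
  has (matches Q w) (iota 0 (size w).+1).

Definition nzeros (w : seq bool) : nat := count_mem false w.

Definition seedPQ (p q : nat) : seq bool := nseq p true ++ false :: nseq q true.

Definition max_undetected_len (Q : seq bool) (k L : nat) : Prop :=
  (exists w : seq bool, [/\ size w = L, nzeros w = k & ~~ detects Q w]) /\
  (forall w : seq bool, nzeros w = k -> ~~ detects Q w -> size w <= L).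

Definition critical_length (Q : seq bool) (k m : nat) : Prop :=
  (forall n, m <= n -> forall w : seq bool, size w = n -> nzeros w = k -> detects Q w) /\
  (forall m', (forall n, m' <= n -> forall w : seq bool, size w = n -> nzeros w = k -> detects Q w) -> m <= m').

From mathcomp Require Import all_boot zify.

(* Write a word as blocks 1^a 0 w.  Two local facts drive everything:
   - Q detects 1^a 0 1^b ... as soon as a >= p and b >= q, and detects any
     word starting with p+q+1 ones;
   - conversely, if w is undetected and a <= p+q, then 1^a 0 w is still
     undetected, unless a >= p and the first q letters of w are all ones.
   Peeling one or two leading blocks off an undetected word therefore shows
   that its length is bounded by any function F with
     F 0 >= p+q,  F 1 >= p+2q,  F (k+1) >= F k + p,  F (k+2) >= F k + p+2q+1
   (lemma [undetected_size_bound]).  The two closed forms of the theorem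
   satisfy these recurrences in their respective ranges of p, and the
   words (1^(p-1) 0)^k 1^(p+q) and (1^(p+q) 0 1^(q-1) 0)^l 1^(p+q)
   (optionally preceded by 1^(p-1) 0) attain them. *)

Lemma nzeros_block a w : nzeros (nseq a true ++ false :: w) = (nzeros w).+1.
Proof. by rewrite /nzeros count_cat count_nseq /= mul0n. Qed.

Lemma size_block a w : size (nseq a true ++ false :: w) = a + (size w).+1.
Proof. by rewrite size_cat size_nseq. Qed.

Lemma nzeros_run a : nzeros (nseq a true) = 0.
Proof. by rewrite /nzeros count_nseq /= mul0n. Qed.

Section SeedPQ.

Variables p q : nat.

Local Notation Q := (seedPQ p q).

Lemma size_seedPQ : size Q = p + q + 1.
Proof. by rewrite /seedPQ size_cat /= !size_nseq; lia. Qed.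

Lemma nth_seedPQ t : t < p + q + 1 -> nth false Q t = (t != p).
Proof.
move=> ht; rewrite /seedPQ nth_cat size_nseq.
case: (ltngtP t p) => htp; first by rewrite nth_nseq htp.
- by rewrite -[t - p]prednK ?subn_gt0 //= nth_nseq ifT //; lia.
- by rewrite htp subnn.
Qed.

Lemma matchesP w i : matches Q w i <->
  i + (p + q + 1) <= size w /\
  (forall t, t < p + q + 1 -> t != p -> nth false w (i + t)).
Proof.
rewrite /matches size_seedPQ; split.
- move=> /andP [hfit /allP hall]; split=> // t ht htp.
  have := hall t; rewrite mem_iota add0n ht => /(_ isT).
  by rewrite nth_seedPQ // htp.
- move=> [hfit hall]; apply/andP; split=> //; apply/allP => t.
  rewrite mem_iota add0n /= => ht.
  by rewrite nth_seedPQ //; apply/implyP; exact: hall.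
Qed.

Lemma detectsP w : reflect (exists i, matches Q w i) (detects Q w).
Proof.
apply: (iffP hasP) => [[i _ hi] | [i hi]]; first by exists i.
exists i => //; rewrite mem_iota add0n ltnS.
by case/andP: hi => hfit _; apply: leq_trans hfit; rewrite leq_addr.
Qed.

Lemma undetected_suffix u w : ~~ detects Q (u ++ w) -> ~~ detects Q w.
Proof.
apply: contra => /detectsP [i /matchesP [hfit hall]].
apply/detectsP; exists (size u + i); apply/matchesP; split.
- by rewrite size_cat -addnA leq_add2l.
- move=> t ht htp; rewrite -addnA nth_cat ltnNge leq_addr /= addKn.
  exact: hall.
Qed.

Lemma detects_long_run m r : p + q + 1 <= m -> detects Q (nseq m true ++ r).
Proof.
move=> hm; apply/detectsP; exists 0; apply/matchesP; split.
- by rewrite size_cat size_nseq add0n (leq_trans hm) ?leq_addr.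
- move=> t ht _; have htm : t < m := leq_trans ht hm.
  by rewrite add0n nth_cat size_nseq htm nth_nseq htm.
Qed.

Lemma detects_runs a b r : p <= a -> q <= b ->
  detects Q (nseq a true ++ false :: nseq b true ++ r).
Proof.
move=> ha hb; apply/detectsP; exists (a - p); apply/matchesP; split.
- by rewrite size_cat size_nseq /= size_cat size_nseq; lia.
- move=> t ht htp; rewrite nth_cat size_nseq.
  case: ltnP => hpos; first by rewrite nth_nseq hpos.
  have -> : a - p + t - a = (t - p - 1).+1 by lia.
  by rewrite /= nth_cat size_nseq ifT ?nth_nseq ?ifT //; lia.
Qed.

Lemma undetected_run a : a <= p + q -> ~~ detects Q (nseq a true).
Proof.
move=> ha; apply/detectsP => -[i /matchesP [hfit _]].
by rewrite size_nseq in hfit; lia.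
Qed.

(* Prepending 1^a 0 (a <= p+q) to an undetected word w keeps it undetected,
   provided that, when a >= p, the window placing the joker on the new zero
   is blocked by a zero of w among its first q letters. *)
Lemma undetected_block a w : a <= p + q -> ~~ detects Q w ->
  (p <= a -> exists2 j, j < q & nth false w j = false) ->
  ~~ detects Q (nseq a true ++ false :: w).
Proof.
move=> ha hw hzero; apply/detectsP => -[i /matchesP [hfit hall]].
set W := nseq a true ++ false :: w in hfit hall.
have nth_zero : nth false W a = false by rewrite nth_cat size_nseq ltnn subnn.
have nth_tail j : nth false W (a + 1 + j) = nth false w j.
  by rewrite nth_cat size_nseq ltnNge -addnA leq_addr /= addKn add1n.
have size_W : size W = a + 1 + size w by rewrite size_block; lia.
case: (ltnP a i) => [hai | hia].
- (* the match lies inside w *)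
  move/detectsP: hw; apply; exists (i - (a + 1)); apply/matchesP; split.
  + by rewrite size_W in hfit; lia.
  + move=> t ht htp; rewrite -nth_tail.
    have -> : a + 1 + (i - (a + 1) + t) = i + t by lia.
    exact: hall.
- have [hjoker | hsolid] := eqVneq (a - i) p.
  + (* the joker covers the separating zero: a zero of w is hit *)
    have [j hjq hj] : exists2 j, j < q & nth false w j = false.
      by apply: hzero; lia.
    have := hall (p + 1 + j) ltac:(lia) ltac:(lia).
    by rewrite (_ : i + _ = a + 1 + j) ?nth_tail ?hj //; lia.
  + (* a solid position covers the separating zero *)
    have hwin : a - i < p + q + 1 by rewrite size_W in hfit; lia.
    by have := hall _ hwin hsolid; rewrite subnKC // nth_zero.
Qed.

End SeedPQ.

Lemma first_zero_split w :
  exists a, w = nseq a true \/ exists w', w = nseq a true ++ false :: w'.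
Proof.
elim: w => [|[] w [a [-> | [w' ->]]]]; first by exists 0; left.
- by exists a.+1; left.
- by exists a.+1; right; exists w'.
- by exists 0; right; exists (nseq a true).
- by exists 0; right; exists (nseq a true ++ false :: w').
Qed.

Lemma undetected_size_bound p q (F : nat -> nat) :
  p + q <= F 0 -> p + 2 * q <= F 1 ->
  (forall k, F k + p <= F k.+1) ->
  (forall k, F k + p + 2 * q + 1 <= F k.+2) ->
  forall w, ~~ detects (seedPQ p q) w -> size w <= F (nzeros w).
Proof.
move=> F0 F1 F_step F_step2 w; have [n] := ubnP (size w).
elim: n w => [//|n IH] w hsize hw.
have [a [ew | [w' ew]]] := first_zero_split w; subst w.
  have [ha | ha] := leqP a (p + q); first by rewrite size_nseq nzeros_run; lia.
  by move: hw; rewrite -(cats0 (nseq a true)) detects_long_run //; lia.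
have [ha | ha] := leqP a (p + q); last by move: hw; rewrite detects_long_run //; lia.
have hw' : ~~ detects (seedPQ p q) w'.
  by apply: (@undetected_suffix p q (rcons (nseq a true) false)); rewrite cat_rcons.
rewrite nzeros_block size_block.
have [hap | hpa] := ltnP a p.
  have := IH w' ltac:(rewrite size_block in hsize; lia) hw'.
  by have := F_step (nzeros w'); lia.
have [b [ew' | [w'' ew']]] := first_zero_split w'; subst w'.
  have [hb | hb] := ltnP b q; last by rewrite -(cats0 (nseq b true)) detects_runs in hw.
  by rewrite nzeros_run size_nseq; lia.
have [hb | hb] := ltnP b q; last by rewrite detects_runs in hw.
have hw'' : ~~ detects (seedPQ p q) w''.
  by apply: (@undetected_suffix p q (rcons (nseq b true) false)); rewrite cat_rcons.
have := IH w'' ltac:(rewrite !size_block in hsize; lia) hw''.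
by rewrite nzeros_block size_block; have := F_step2 (nzeros w''); lia.
Qed.

Section Witnesses.

Variables p q : nat.
Hypotheses (hq : 1 <= q) (hqp : q <= p).

(* (1^(p-1) 0)^k 1^(p+q): optimal when p >= 2q+1. *)
Fixpoint sparse_word k : seq bool :=
  if k is k'.+1 then nseq (p - 1) true ++ false :: sparse_word k'
  else nseq (p + q) true.

(* (1^(p+q) 0 1^(q-1) 0)^l 1^(p+q): optimal with 2l zeros when p <= 2q+1. *)
Fixpoint paired_word l : seq bool :=
  if l is l'.+1 then
    nseq (p + q) true ++ false :: nseq (q - 1) true ++ false :: paired_word l'
  else nseq (p + q) true.

Lemma undetected_short_block w :
  ~~ detects (seedPQ p q) w -> ~~ detects (seedPQ p q) (nseq (p - 1) true ++ false :: w).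
Proof. by move=> hw; apply: undetected_block => //; lia. Qed.

Lemma sparse_word_spec k :
  [/\ size (sparse_word k) = (k + 1) * p + q, nzeros (sparse_word k) = k
    & ~~ detects (seedPQ p q) (sparse_word k)].
Proof.
elim: k => [|k [hsize hzeros hundet]] /=.
  by rewrite size_nseq nzeros_run undetected_run //; split=> //; lia.
rewrite size_block hsize nzeros_block hzeros.
by rewrite undetected_short_block //; split=> //; lia.
Qed.

Lemma paired_word_spec l :
  [/\ size (paired_word l) = (l + 1) * p + (2 * l + 1) * q + l,
      nzeros (paired_word l) = 2 * l
    & ~~ detects (seedPQ p q) (paired_word l)].
Proof.
elim: l => [|l [hsize hzeros hundet]] /=.
  by rewrite size_nseq nzeros_run undetected_run //; split=> //; lia.
rewrite !size_block hsize !nzeros_block hzeros; split; [lia | lia |].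
apply: undetected_block => //.
- by apply: undetected_block => //; lia.
- by move=> _; exists (q - 1); [lia | rewrite nth_cat size_nseq ltnn subnn].
Qed.

End Witnesses.

Definition balanced_bound p q k :=
  if odd k then (k./2 + 2) * p + (2 * k./2 + 1) * q + k./2
  else (k./2 + 1) * p + (2 * k./2 + 1) * q + k./2.

Lemma balanced_bound_even p q l :
  balanced_bound p q (2 * l) = (l + 1) * p + (2 * l + 1) * q + l.
Proof.
have half_k : (2 * l)./2 = l by rewrite mul2n half_double.
by rewrite /balanced_bound half_k mul2n odd_double.
Qed.

Lemma balanced_bound_odd p q l :
  balanced_bound p q (2 * l + 1) = (l + 2) * p + (2 * l + 1) * q + l.
Proof.
have half_k : (2 * l + 1)./2 = l by rewrite mul2n addn1 /= uphalf_double.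
by rewrite /balanced_bound half_k mul2n addn1 /= odd_double.
Qed.

Lemma even_or_odd k : exists l, k = 2 * l \/ k = 2 * l + 1.
Proof.
exists k./2; have := odd_double_half k; rewrite -mul2n.
by case: (odd k) => /= e; [right | left]; lia.
Qed.

Lemma balanced_bound_recurrences p q : q <= p -> p <= 2 * q + 1 ->
  [/\ p + q <= balanced_bound p q 0, p + 2 * q <= balanced_bound p q 1,
      forall k, balanced_bound p q k + p <= balanced_bound p q k.+1
    & forall k, balanced_bound p q k + p + 2 * q + 1 <= balanced_bound p q k.+2].
Proof.
move=> hqp hp; have E := balanced_bound_even p q; have O := balanced_bound_odd p q.
split; first by rewrite (E 0); lia.
- by rewrite (O 0); lia.
- move=> k; have [l [-> | ->]] := even_or_odd k.
  + by rewrite (_ : (2 * l).+1 = 2 * l + 1) ?E ?O; lia.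
  + by rewrite (_ : (2 * l + 1).+1 = 2 * (l + 1)) ?E ?O; lia.
- move=> k; have [l [-> | ->]] := even_or_odd k.
  + by rewrite (_ : (2 * l).+2 = 2 * (l + 1)) ?E; lia.
  + by rewrite (_ : (2 * l + 1).+2 = 2 * (l + 1) + 1) ?O; lia.
Qed.

Lemma critical_of_max_undetected Q k L :
  max_undetected_len Q k L -> critical_length Q k (L + 1).
Proof.
move=> [[w [hsize hzeros hundet]] hmax]; split.
- move=> n hn v hv hvz; apply: contraT => hvd.
  by have := hmax v hvz hvd; lia.
- move=> m hm; rewrite leqNgt; apply/negP => hlt.
  by move: hundet; rewrite (hm L) //; lia.
Qed.

Theorem mainTheorem2 (p q : nat) (hq : 1 <= q) (hqp : q <= p) :
  (2 * q + 1 <= p ->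
     forall k, 1 <= k -> max_undetected_len (seedPQ p q) k ((k + 1) * p + q)) /\
  (p <= 2 * q + 1 ->
     (forall l, max_undetected_len (seedPQ p q) (2 * l + 1)
                  ((l + 2) * p + (2 * l + 1) * q + l)) /\
     (forall l, 1 <= l -> max_undetected_len (seedPQ p q) (2 * l)
                  ((l + 1) * p + (2 * l + 1) * q + l))) /\
  (forall k L, 1 <= k -> max_undetected_len (seedPQ p q) k L ->
     critical_length (seedPQ p q) k (L + 1)).
Proof.
split; [|split]; last by move=> k L _; exact: critical_of_max_undetected.
- move=> hp k _; split; last first.
    by move=> w <-; apply: (@undetected_size_bound p q (fun k => (k + 1) * p + q)) => *; lia.
  by have [? ? ?] := sparse_word_spec p q hq hqp k; exists (sparse_word p q k).
- move=> hp; have [F0 F1 Fs Fs2] := balanced_bound_recurrences p q hqp hp.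
  have bound := @undetected_size_bound p q _ F0 F1 Fs Fs2.
  split=> [l | l _]; split.
  + have [hsize hzeros hundet] := paired_word_spec p q hq hqp l.
    exists (nseq (p - 1) true ++ false :: paired_word p q l).
    rewrite size_block hsize nzeros_block hzeros undetected_short_block //.
    by split=> //; lia.
  + by move=> w hzeros /bound; rewrite hzeros balanced_bound_odd.
  + by have [? ? ?] := paired_word_spec p q hq hqp l; exists (paired_word p q l).
  + by move=> w hzeros /bound; rewrite hzeros balanced_bound_even.
Qed.
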